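(* Let $\Phi$ be a set composition of $[n]$. Then $$\mathbf{F}_\Phi=\sum_{\Psi\text{ reforms }\Phi}\mathbf{M}_\Psi,$$ and hence $\{\mathbf{F}_\Phi\}$ (over all set compositions $\Phi$) is a basis of $\mathrm{NCQSym}(\mathbf{x})$.
   Context: A set composition $\Phi=(\Phi_1|\cdots|\Phi_k)$ of $[n]$ is an ordered list of disjoint nonempty sets with union $[n]$; blocks are written with elements in increasing order. $\Psi$ reforms $\Phi$ if $\Psi$ is obtained from $\Phi$ (written as a word with bars) by inserting some bars, the numbers remaining in the same order; e.g. $(1|3|2|4|56)$ reforms $(13|2|4|56)$ but $(3|1|2|4|56)$ does not. $\mathbf{M}_\Phi=\sum\mathbf{x}_{i_1}\cdots\mathbf{x}_{i_n}$ (noncommuting variables) over tuples with $i_j=i_\ell$ if $j,\ell$ are in the same block and $i_j<i_\ell$ if $j\in\Phi_p,\ell\in\Phi_q$, $p<q$. $\mathrm{NCQSym}(\mathbf{x})$ is the space of bounded-degree noncommutative series in which, for each set composition, all such monomials have equal coefficients. An edge-coloured digraph is a finite simple digraph with each edge dashed, solid ($\rightarrow$) or double ($\Rightarrow$); proper vertex-colourings $\kappa:V\to\mathbb{P}$ satisfy $\kappa(a)\ne\kappa(b)$, $\kappa(a)<\kappa(b)$, $\kappa(a)\le\kappa(b)$ for dashed, solid, double edges $(a,b)$. For a labelling bijection $L:V(G)\to[|V(G)|]$, $\mathscr{Y}_{(G,L)}(\mathbf{x})=\sum_\kappa\mathbf{x}_{\kappa(L^{-1}(1))}\cdots\mathbf{x}_{\kappa(L^{-1}(|V(G)|))}$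 over proper vertex-colourings. For a finite $A=\{a_1<\dots<a_m\}\subseteq\mathbb{P}$, $Q_A$ is the directed path $v_1\Rightarrow v_2\Rightarrow\cdots\Rightarrow v_m$ (double edges) with $v_i$ labelled $a_i$. The solid sum of two labelled digraphs is their disjoint union with a solid edge from every vertex of the first to every vertex of the second. Define $\mathbf{F}_\Phi=\mathscr{Y}_{(G,L)}(\mathbf{x})$ with $(G,L)=Q_{\Phi_1}$ solid-sum $Q_{\Phi_2}$ solid-sum $\cdots$ solid-sum $Q_{\Phi_k}$. *)

From mathcomp Require Import all_boot all_order all_algebra.
Set Implicit Arguments.
Unset Strict Implicit.
Unset Printing Implicit Defensive.
Import GRing.Theory.

(* Conventions:
   - the variable x_i (i in P = {1,2,...}) is represented by the letter i-1 : nat;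
     a noncommutative monomial is a word (seq nat), a noncommutative series with
     coefficients in R is a function word -> R (coefficient of each monomial).
   - [n] = {1..n} is represented by 'I_n (j : 'I_n stands for j+1); labels of
     labelled digraphs are likewise shifted by one (label a stands for a+1). *)

Definition word := seq nat.
Definition series (R : Type) := word -> R.

Definition is_setcomp n (Phi : seq {set 'I_n}) : bool :=
  [&& all (fun B : {set 'I_n} => B != set0) Phi,
      pairwise (fun A B : {set 'I_n} => [disjoint A & B]) Phi &
      [forall j : 'I_n, has (fun B : {set 'I_n} => j \in B) Phi]].

Definition blk n (Phi : seq {set 'I_n}) (j : 'I_n) : nat :=
  find (fun B : {set 'I_n} => j \in B) Phi.

Definition block_word n (B : {set 'I_n}) : seq nat :=
  sort leq [seq val i | i <- enum B].

Definition cword n (Phi : seq {set 'I_n}) : seq nat :=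
  flatten [seq block_word B | B <- Phi].

(* positions of the bars in Phi written as a word with bars *)
Definition bars n (Phi : seq {set 'I_n}) : seq nat :=
  [seq sumn (take k [seq size (block_word B) | B <- Phi]) | k <- iota 0 (size Phi).+1].

Definition reforms n (Psi Phi : seq {set 'I_n}) : bool :=
  (cword Psi == cword Phi) && all (fun b => b \in bars Psi) (bars Phi).

Definition matches n (Phi : seq {set 'I_n}) (w : word) : bool :=
  (size w == n) &&
  [forall j : 'I_n, forall l : 'I_n,
     ((blk Phi j == blk Phi l) ==> (nth 0 w j == nth 0 w l)) &&
     ((blk Phi j < blk Phi l) ==> (nth 0 w j < nth 0 w l))].

Definition Mser (R : nzRingType) n (Phi : seq {set 'I_n}) : series R :=
  fun w => ((matches Phi w)%:R)%R.

Inductive ecol := Dashed | Solid | Double.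

(* a labelled digraph: vertices identified with their (distinct) labels;
   lg_edge a b = Some c  iff there is an edge (a,b) of colour c *)
Record lgraph := LGraph { lg_vert : seq nat; lg_edge : nat -> nat -> option ecol }.

Definition proper_edge (c : ecol) (x y : nat) : bool :=
  match c with
  | Dashed => x != y
  | Solid => x < y
  | Double => x <= y
  end.

(* Y_(G,L): coefficient of the word w is the number of proper colourings
   kappa with kappa(L^-1(j)) = w_j for all j, i.e. 1 if the colouring
   a |-> w_a is proper (and the labels are exactly [|w|]), else 0. *)
Definition Yser (R : nzRingType) (G : lgraph) : series R := fun w =>
  (perm_eq (lg_vert G) (iota 0 (size w)) &&
   all (fun a => all (fun b =>
          if lg_edge G a b is Some c then proper_edge c (nth 0 w a) (nth 0 w b)
          else true) (lg_vert G)) (lg_vert G))%:R%R.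

(* Q_A: double-edge path through the elements of A in increasing order *)
Definition Qgraph (A : seq nat) : lgraph :=
  let s := sort leq A in
  LGraph s (fun a b =>
    if has (fun i => (nth 0 s i == a) && (nth 0 s i.+1 == b)) (iota 0 (size s).-1)
    then Some Double else None).

(* solid sum (for graphs with disjoint label sets) *)
Definition ssum (G H : lgraph) : lgraph :=
  LGraph (lg_vert G ++ lg_vert H) (fun a b =>
    if (a \in lg_vert G) && (b \in lg_vert G) then lg_edge G a b
    else if (a \in lg_vert H) && (b \in lg_vert H) then lg_edge H a b
    else if (a \in lg_vert G) && (b \in lg_vert H) then Some Solid
    else None).

Definition lg_empty : lgraph := LGraph [::] (fun _ _ => None).

Definition Fgraph n (Phi : seq {set 'I_n}) : lgraph :=
  foldr ssum lg_empty [seq Qgraph (block_word B) | B <- Phi].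

Definition Fser (R : nzRingType) n (Phi : seq {set 'I_n}) : series R :=
  Yser R (Fgraph Phi).

Definition bounded_degree (R : nzRingType) (f : series R) : Prop :=
  exists d : nat, forall w : word, (d < size w)%N -> f w = 0%R.

Definition in_NCQSym (R : nzRingType) (f : series R) : Prop :=
  bounded_degree f /\
  forall n (Phi : seq {set 'I_n}), is_setcomp Phi ->
    forall u v : word, matches Phi u -> matches Phi v -> f u = f v.

(* finite sum over all set compositions Psi of [n] satisfying P
   (each has at most n blocks, so is a k-tuple of sets for a unique k <= n) *)
Definition sum_setcomp (R : nzRingType) n (P : seq {set 'I_n} -> bool)
    (G : seq {set 'I_n} -> R) : R :=
  (\sum_(k < n.+1) \sum_(Psi : k.-tuple {set 'I_n} | is_setcomp Psi && P Psi) G Psi)%R.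

(* A word w is a proper colouring of the graph of F_Phi iff it is weakly increasing along
   each block of Phi (read in increasing order) and strictly increasing from one block to
   the next ([weakly_matches]).  This only depends on the relative order of the letters of
   w, i.e. on the unique set composition Psi such that w is a monomial of M_Psi, and it holds
   exactly when Psi reforms Phi; hence F_Phi is the sum of the M_Psi over the Psi reforming
   Phi.  At the least monomial w_Phi of M_Phi, F_Phi takes the value 1, while F_Psi vanishes
   unless Phi reforms Psi, in which case every element lies in a block of Psi of index at
   most its block index in Phi.  So the matrix (F_Psi(w_Phi)) is unitriangular for the total
   block index [blk_sum]: this gives linear independence, and spanning by back substitution
   (a series in NCQSym is determined by its values at the words w_Phi). *)

From mathcomp Require Import all_boot all_order all_algebra.
From mathcomp Require Import zify.
Import GRing.Theory.
Set Implicit Arguments.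
Unset Strict Implicit.
Unset Printing Implicit Defensive.

Section Unitriangular.

Variables (R : pzRingType) (T : finType) (S : pred T) (rk : T -> nat) (A : T -> T -> R).

Local Open Scope ring_scope.

Hypothesis A_diag : forall x, S x -> A x x = 1.
Hypothesis A_triangular :
  forall x y, S x -> S y -> x != y -> A x y != 0 -> (rk x < rk y)%N.

Lemma big_unitriangular (c : T -> R) y : S y ->
  \sum_(x | S x) c x * A x y = c y + \sum_(x | S x && (x != y)) c x * A x y.
Proof. by move=> Sy; rewrite (bigD1 y) //= A_diag // mulr1. Qed.

Lemma unitriangular_independent (c : T -> R) :
  (forall y, S y -> \sum_(x | S x) c x * A x y = 0) -> forall y, S y -> c y = 0.
Proof.
move=> c_sum0; suff c0 m y : S y -> (rk y < m)%N -> c y = 0.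
  by move=> y Sy; apply: (c0 (rk y).+1).
elim: m y => // m IHm y Sy lt_y_m.
have := c_sum0 y Sy; rewrite big_unitriangular // big1 ?addr0 // => x /andP [Sx neq].
have [->|nz] := eqVneq (A x y) 0; first by rewrite mulr0.
by rewrite IHm ?mul0r // (leq_trans (A_triangular Sx Sy neq nz)).
Qed.

(* Back substitution with fuel [m]; the value at [x] no longer depends on [m] once [rk x < m]. *)
Fixpoint unitriangular_approx (b : T -> R) m x : R :=
  if m is m'.+1 then
    b x - \sum_(x' | S x' && (x' != x)) unitriangular_approx b m' x' * A x' x
  else 0.

Lemma unitriangular_approxS b m x : unitriangular_approx b m.+1 x =
  b x - \sum_(x' | S x' && (x' != x)) unitriangular_approx b m x' * A x' x.
Proof. by []. Qed.

Definition unitriangular_solve b x := unitriangular_approx b (rk x).+1 x.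

Lemma unitriangular_approx_stable b m x : S x -> (rk x < m)%N ->
  unitriangular_approx b m x = unitriangular_solve b x.
Proof.
elim/ltn_ind: m x => -[//|m] IHm x Sx lt_x_m.
rewrite /unitriangular_solve !unitriangular_approxS; congr (_ - _).
apply: eq_bigr => x' /andP [Sx' neq].
have [->|nz] := eqVneq (A x' x) 0; first by rewrite !mulr0.
have lt_x'_x := A_triangular Sx' Sx neq nz.
by rewrite (IHm m) ?(IHm (rk x)) //; lia.
Qed.

Lemma unitriangular_solveP b y : S y ->
  \sum_(x | S x) unitriangular_solve b x * A x y = b y.
Proof.
move=> Sy; rewrite big_unitriangular //.
rewrite {1}/unitriangular_solve unitriangular_approxS.
rewrite -[RHS](subrK (\sum_(x | S x && (x != y)) unitriangular_approx b (rk y) x * A x y)).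
congr (_ + _); apply: eq_bigr => x /andP [Sx neq].
have [->|nz] := eqVneq (A x y) 0; first by rewrite !mulr0.
by rewrite unitriangular_approx_stable // (A_triangular Sx Sy neq nz).
Qed.

End Unitriangular.

Lemma sorted_rel_leq (r : rel nat) s x y : transitive r -> reflexive r ->
  sorted leq s -> sorted r s -> x \in s -> y \in s -> x <= y -> r x y.
Proof.
move=> r_tr r_refl s_leq s_r xs ys le_xy.
apply: (sorted_leq_index r_tr r_refl s_r) => //; rewrite leqNgt; apply/negP.
move=> lt_idx; have le_yx := sorted_ltn_index leq_trans s_leq y x ys xs lt_idx.
have /eqP eq_xy : x == y by rewrite eqn_leq le_xy le_yx.
by move: lt_idx; rewrite eq_xy ltnn.
Qed.

Lemma index_flatten_ltn (T : eqType) (ss : seq (seq T)) x k : x \in flatten ss ->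
  (index x (flatten ss) < sumn (take k (shape ss))) = (find (fun s => x \in s) ss < k).
Proof.
elim: ss k => [|s ss IHss] [|k] //=; rewrite mem_cat index_cat.
case: ifP => [xs _ | _ /= x_ss]; first by rewrite ltn_addr ?index_mem.
by rewrite ltn_add2l IHss.
Qed.

Lemma index_flatten_sorted (ss : seq (seq nat)) x y : all (sorted leq) ss ->
  x \in flatten ss -> y \in flatten ss ->
  find (fun s => x \in s) ss = find (fun s => y \in s) ss -> x < y ->
  index x (flatten ss) < index y (flatten ss).
Proof.
elim: ss => [|s ss IHss] //= /andP [s_sorted ss_sorted].
rewrite !mem_cat !index_cat; case: ifP => xs; case: ifP => ys //= x_ss y_ss.
  move=> _ lt_xy; rewrite ltnNge; apply: contraL lt_xy => le_idx.
  by rewrite -leqNgt (sorted_leq_index leq_trans leqnn s_sorted).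
by case=> eq_find lt_xy; rewrite ltn_add2l IHss.
Qed.

Section BlockWord.

Variables (n : nat) (B : {set 'I_n}).

Lemma mem_block_word (j : 'I_n) : (val j \in block_word B) = (j \in B).
Proof. by rewrite /block_word mem_sort (mem_map val_inj) mem_enum. Qed.

Lemma block_wordP x : x \in block_word B -> exists2 j : 'I_n, j \in B & x = val j.
Proof. by rewrite /block_word mem_sort => /mapP [j]; rewrite mem_enum; exists j. Qed.

Lemma sorted_block_word : sorted leq (block_word B).
Proof. exact/sort_sorted/leq_total. Qed.

Lemma uniq_block_word : uniq (block_word B).
Proof. by rewrite sort_uniq (map_inj_uniq val_inj) enum_uniq. Qed.

Lemma sort_block_word : sort leq (block_word B) = block_word B.
Proof. exact/sorted_sort/sorted_block_word/leq_trans. Qed.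

Lemma size_block_word_gt0 : B != set0 -> 0 < size (block_word B).
Proof.
case/set0Pn => j jB; rewrite lt0n size_eq0; apply/eqP => bw0.
by have := mem_block_word j; rewrite bw0 jB.
Qed.

End BlockWord.

Lemma setcompP n (Phi : seq {set 'I_n}) : is_setcomp Phi ->
  [/\ forall B, B \in Phi -> B != set0,
      pairwise (fun A B : {set 'I_n} => [disjoint A & B]) Phi &
      forall j : 'I_n, has (fun B : {set 'I_n} => j \in B) Phi].
Proof. by case/and3P => /allP nonempty disjoint /forallP cover. Qed.

Section SetComposition.

Variables (n : nat) (Phi : seq {set 'I_n}).
Hypothesis Phi_sc : is_setcomp Phi.

Lemma blk_lt_size j : blk Phi j < size Phi.
Proof. by case/setcompP: Phi_sc => _ _ cover; rewrite /blk -has_find. Qed.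

Lemma mem_nth_blk j : j \in nth set0 Phi (blk Phi j).
Proof. by case/setcompP: Phi_sc => _ _ cover; apply: (nth_find set0 (cover j)). Qed.

Lemma mem_nth_setcomp j q : q < size Phi -> (j \in nth set0 Phi q) = (blk Phi j == q).
Proof.
move=> lt_q; apply/idP/eqP => [j_q|<-]; last exact: mem_nth_blk.
case: (ltngtP (blk Phi j) q) => // lt_blk; last by have := before_find set0 lt_blk; rewrite j_q.
case/setcompP: Phi_sc => _ /(pairwiseP set0) disj _.
have := disj _ _ (blk_lt_size j) lt_q lt_blk.
by move/disjointFr/(_ (mem_nth_blk j)); rewrite j_q.
Qed.

Lemma blk_surj q : q < size Phi -> exists j, blk Phi j = q.
Proof.
move=> lt_q; case/setcompP: Phi_sc => nonempty _ _.
case/set0Pn: (nonempty _ (mem_nth set0 lt_q)) => j j_q.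
by exists j; apply/eqP; rewrite -mem_nth_setcomp.
Qed.

Lemma find_block_word j : find (fun B => val j \in block_word B) Phi = blk Phi j.
Proof. by apply: eq_find => B; rewrite mem_block_word. Qed.

End SetComposition.

Lemma setcomp_eq n (Psi Phi : seq {set 'I_n}) : is_setcomp Psi -> is_setcomp Phi ->
  blk Psi =1 blk Phi -> Psi = Phi.
Proof.
move=> Psi_sc Phi_sc eq_blk.
have eq_size : size Psi = size Phi.
  apply/eqP; rewrite eqn_leq; apply/andP; split; rewrite leqNgt; apply/negP => lt.
  - have [j eq_j] := blk_surj Psi_sc lt.
    by have := blk_lt_size Phi_sc j; rewrite -eq_blk eq_j ltnn.
  - have [j eq_j] := blk_surj Phi_sc lt.
    by have := blk_lt_size Psi_sc j; rewrite eq_blk eq_j ltnn.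
apply: (eq_from_nth (x0 := set0)) => // q lt_q; apply/setP => j.
by rewrite (mem_nth_setcomp Psi_sc) // (mem_nth_setcomp Phi_sc) -?eq_size ?eq_blk.
Qed.

Lemma blk_le n (Psi Phi : seq {set 'I_n}) : is_setcomp Psi -> is_setcomp Phi ->
  (forall j l, blk Psi j < blk Psi l -> blk Phi j < blk Phi l) ->
  forall j, blk Psi j <= blk Phi j.
Proof.
move=> Psi_sc Phi_sc mono.
suff le_blk q j : blk Psi j = q -> q <= blk Phi j by move=> j; apply: le_blk.
elim: q j => // q IHq l eq_l.
have lt_q : q < size Psi by have := blk_lt_size Psi_sc l; lia.
have [j eq_j] := blk_surj Psi_sc lt_q.
by apply: leq_trans (mono j l _); rewrite ?eq_j ?eq_l // ltnS IHq.
Qed.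

Definition proper_at (G : lgraph) (w : word) a b : bool :=
  if lg_edge G a b is Some c then proper_edge c (nth 0 w a) (nth 0 w b) else true.

Definition proper_colouring (G : lgraph) (w : word) : bool :=
  all (fun a => all (proper_at G w a) (lg_vert G)) (lg_vert G).

Lemma proper_colouring_Qgraph A w :
  proper_colouring (Qgraph A) w = sorted (relpre (nth 0 w) leq) (sort leq A).
Proof.
rewrite /proper_colouring /proper_at /=; set s := sort leq A; apply/idP/idP.
- move=> /allP colour_ok; apply/(sortedP 0) => i lt_i.
  have s_i : nth 0 s i \in s by apply/mem_nth/ltnW.
  have := allP (colour_ok _ s_i) _ (mem_nth 0 lt_i); case: ifP => // /hasPn/(_ i).
  by rewrite mem_iota !eqxx /=; move/(_ (ltac:(lia))).
- move=> /(sortedP 0) s_sorted; apply/allP => a _; apply/allP => b _.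
  case: ifP => // /hasP [i]; rewrite mem_iota => /andP [_ lt_i] /andP [/eqP <- /eqP <-].
  by apply: s_sorted; lia.
Qed.

Lemma proper_colouring_ssum G H w : {in lg_vert G, forall x, x \notin lg_vert H} ->
  proper_colouring (ssum G H) w = [&& proper_colouring G w, proper_colouring H w &
                                      allrel (relpre (nth 0 w) ltn) (lg_vert G) (lg_vert H)].
Proof.
move=> disj; have notinG x : x \in lg_vert H -> x \notin lg_vert G.
  by move=> xH; apply/negP => /disj; rewrite xH.
have properGG a b : a \in lg_vert G -> b \in lg_vert G ->
  proper_at (ssum G H) w a b = proper_at G w a b.
  by move=> aG bG; rewrite /proper_at /= aG bG.
have properGH a b : a \in lg_vert G -> b \in lg_vert H ->
  proper_at (ssum G H) w a b = relpre (nth 0 w) ltn a b.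
  by move=> aG bH; rewrite /proper_at /= aG (negbTE (notinG b bH)) (negbTE (disj a aG)) bH.
have properHG a b : a \in lg_vert H -> b \in lg_vert G -> proper_at (ssum G H) w a b.
  by move=> aH bG; rewrite /proper_at /= (negbTE (notinG a aH)) (negbTE (disj b bG)) !andbF.
have properHH a b : a \in lg_vert H -> b \in lg_vert H ->
  proper_at (ssum G H) w a b = proper_at H w a b.
  by move=> aH bH; rewrite /proper_at /= (negbTE (notinG a aH)) aH bH.
rewrite /proper_colouring [lg_vert (ssum G H)]/= all_cat.
have -> : all (fun a => all (proper_at (ssum G H) w a) (lg_vert G ++ lg_vert H)) (lg_vert G) =
          proper_colouring G w && allrel (relpre (nth 0 w) ltn) (lg_vert G) (lg_vert H).
  rewrite /allrel -all_predI; apply: eq_in_all => a aG; rewrite all_cat.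
  by congr andb; apply: eq_in_all => b bX; [rewrite properGG | rewrite properGH].
have -> : all (fun a => all (proper_at (ssum G H) w a) (lg_vert G ++ lg_vert H)) (lg_vert H) =
          proper_colouring H w.
  apply: eq_in_all => a aH; rewrite all_cat (@eq_in_all _ _ predT) ?all_predT.
    by apply: eq_in_all => b bH; rewrite properHH.
  by move=> b bG; rewrite properHG.
by rewrite -andbA; congr andb; apply: andbC.
Qed.

Lemma mem_cword n (Phi : seq {set 'I_n}) x :
  (x \in cword Phi) = has (fun B => x \in block_word B) Phi.
Proof. by elim: Phi => //= B Phi IH; rewrite /cword /= mem_cat -IH. Qed.

Lemma vert_Fgraph n (Phi : seq {set 'I_n}) : lg_vert (Fgraph Phi) = cword Phi.
Proof. by elim: Phi => //= B Phi ->; rewrite sort_block_word. Qed.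

Lemma proper_colouring_Fgraph n (Phi : seq {set 'I_n}) w :
  pairwise (fun A B : {set 'I_n} => [disjoint A & B]) Phi ->
  proper_colouring (Fgraph Phi) w =
    all (fun B => sorted (relpre (nth 0 w) leq) (block_word B)) Phi &&
    pairwise (fun B C => allrel (relpre (nth 0 w) ltn) (block_word B) (block_word C)) Phi.
Proof.
elim: Phi => //= B Phi IH /andP [/allP disjB disjPhi].
have allrel_cword (Psi : seq {set 'I_n}) :
    allrel (relpre (nth 0 w) ltn) (block_word B) (cword Psi) =
    all (fun C => allrel (relpre (nth 0 w) ltn) (block_word B) (block_word C)) Psi.
  elim: Psi => [|C Psi IHPsi]; first exact: allrel0r.
  by rewrite /cword /= allrel_catr -IHPsi.
rewrite proper_colouring_ssum; last first.
  move=> x; rewrite /= sort_block_word vert_Fgraph mem_cword => /block_wordP [j jB ->].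
  by apply/hasPn => C /disjB /disjointFr; rewrite mem_block_word => ->.
rewrite proper_colouring_Qgraph IH // vert_Fgraph /= sort_block_word allrel_cword.
by rewrite -!andbA; do 2 congr andb; apply: andbC.
Qed.

Lemma uniq_cword n (Phi : seq {set 'I_n}) :
  pairwise (fun A B : {set 'I_n} => [disjoint A & B]) Phi -> uniq (cword Phi).
Proof.
elim: Phi => //= B Phi IH /andP [/allP disjB disjPhi].
rewrite cat_uniq uniq_block_word IH // andbT; apply/hasPn => x.
rewrite [x \in _]mem_cword => /hasP [C CPhi xC]; apply/negP => /block_wordP [j jB xj].
by move: xC; rewrite xj mem_block_word (disjointFr (disjB C CPhi) jB).
Qed.

Section CompositionWord.

Variables (n : nat) (Phi : seq {set 'I_n}).
Hypothesis Phi_sc : is_setcomp Phi.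

Lemma mem_cword_setcomp x : (x \in cword Phi) = (x < n).
Proof.
rewrite mem_cword; apply/hasP/idP => [[B _ /block_wordP [j _ ->]] | lt_x].
  exact: ltn_ord.
case/setcompP: Phi_sc => _ _ /(_ (Ordinal lt_x)) /hasP [B BPhi xB].
by exists B; rewrite // -[x]/(val (Ordinal lt_x)) mem_block_word.
Qed.

Lemma ord_in_cword (j : 'I_n) : val j \in cword Phi.
Proof. by rewrite mem_cword_setcomp ltn_ord. Qed.

Lemma perm_cword : perm_eq (cword Phi) (iota 0 n).
Proof.
apply: uniq_perm; rewrite ?iota_uniq ?uniq_cword //; first by case/setcompP: Phi_sc.
by move=> x; rewrite mem_cword_setcomp mem_iota.
Qed.

Lemma size_cword : size (cword Phi) = n.
Proof. by rewrite (perm_size perm_cword) size_iota. Qed.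

End CompositionWord.

Definition weakly_matches n (Phi : seq {set 'I_n}) (w : word) : bool :=
  (size w == n) && [forall j : 'I_n, forall l : 'I_n,
     ((blk Phi j == blk Phi l) && (j <= l) ==> (nth 0 w j <= nth 0 w l)) &&
     ((blk Phi j < blk Phi l) ==> (nth 0 w j < nth 0 w l))].

Lemma weakly_matchesP n (Phi : seq {set 'I_n}) w :
  reflect (size w = n /\ forall j l : 'I_n,
             (blk Phi j = blk Phi l -> j <= l -> nth 0 w j <= nth 0 w l) /\
             (blk Phi j < blk Phi l -> nth 0 w j < nth 0 w l))
          (weakly_matches Phi w).
Proof.
apply: (iffP andP) => [[/eqP sw /forallP mono] | [sw mono]].
  split => // j l; have /andP [/implyP le_jl /implyP lt_jl] := forallP (mono j) l.
  by split => // eq_jl le; apply: le_jl; rewrite eq_jl eqxx.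
split; first by rewrite sw.
apply/forallP => j; apply/forallP => l; have [le_jl lt_jl] := mono j l.
by apply/andP; split; apply/implyP => // /andP [/eqP]; apply: le_jl.
Qed.

Lemma weakly_matches_blocks n (Phi : seq {set 'I_n}) w : is_setcomp Phi -> size w = n ->
  weakly_matches Phi w =
    all (fun B => sorted (relpre (nth 0 w) leq) (block_word B)) Phi &&
    pairwise (fun B C => allrel (relpre (nth 0 w) ltn) (block_word B) (block_word C)) Phi.
Proof.
move=> Phi_sc sw; apply/weakly_matchesP/andP => [[_ mono] | [/allP sorted_blocks]].
  split.
  - apply/allP => B BPhi; apply/(sortedP 0) => i lt_i.
    have le_i := (sortedP 0 (sorted_block_word B)) i lt_i.
    have /block_wordP [j jB eq_j] : nth 0 (block_word B) i \in block_word B.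
      by apply/mem_nth/ltnW.
    have /block_wordP [l lB eq_l] := mem_nth 0 lt_i.
    have blkB k : k \in B -> blk Phi k = index B Phi.
      by move=> kB; apply/eqP; rewrite -mem_nth_setcomp ?nth_index ?index_mem.
    by rewrite /= eq_j eq_l in le_i *; apply: (mono j l).1; rewrite ?blkB.
  - apply/(pairwiseP set0) => p q; rewrite !inE => lt_p lt_q lt_pq.
    apply/allrelP => _ _ /block_wordP [j jp ->] /block_wordP [l lq ->].
    rewrite (mem_nth_setcomp Phi_sc) // in jp; rewrite (mem_nth_setcomp Phi_sc) // in lq.
    by apply: (mono j l).2; rewrite (eqP jp) (eqP lq).
move=> /(pairwiseP set0) separated; split => // j l; split.
- move=> eq_jl le_jl; set Bj := nth set0 Phi (blk Phi j).
  apply: (@sorted_rel_leq (relpre (nth 0 w) leq) (block_word Bj)).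
  + by move=> a b c; apply: leq_trans.
  + by move=> a; apply: leqnn.
  + exact: sorted_block_word.
  + exact/sorted_blocks/mem_nth/blk_lt_size.
  + by rewrite mem_block_word mem_nth_blk.
  + by rewrite mem_block_word /Bj eq_jl mem_nth_blk.
  + exact: le_jl.
- move=> lt_jl; have := separated _ _ (blk_lt_size Phi_sc j) (blk_lt_size Phi_sc l) lt_jl.
  by move/allrelP; apply; rewrite mem_block_word mem_nth_blk.
Qed.

Lemma FserE (R : nzRingType) n (Phi : seq {set 'I_n}) w : is_setcomp Phi ->
  Fser R Phi w = ((weakly_matches Phi w)%:R)%R.
Proof.
move=> Phi_sc; have -> : Fser R Phi w = ((perm_eq (lg_vert (Fgraph Phi)) (iota 0 (size w)) &&
                                          proper_colouring (Fgraph Phi) w)%:R)%R by [].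
rewrite vert_Fgraph (permPl (perm_cword Phi_sc)).
have [sw | nsw] := eqVneq (size w) n.
  rewrite sw perm_refl weakly_matches_blocks // proper_colouring_Fgraph //.
  by case/setcompP: Phi_sc.
have /negbTE -> : ~~ perm_eq (iota 0 n) (iota 0 (size w)).
  by apply: contra nsw => /perm_size; rewrite !size_iota => ->.
by rewrite /weakly_matches (negbTE nsw).
Qed.

(* The least monomial of M_Phi, letters being indexed from 0. *)
Definition blk_word n (Phi : seq {set 'I_n}) : word := [seq blk Phi j | j <- enum 'I_n].

Lemma size_blk_word n (Phi : seq {set 'I_n}) : size (blk_word Phi) = n.
Proof. by rewrite size_map size_enum_ord. Qed.

Lemma nth_blk_word n (Phi : seq {set 'I_n}) (j : 'I_n) : nth 0 (blk_word Phi) j = blk Phi j.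
Proof. by rewrite (nth_map j) ?size_enum_ord // nth_ord_enum. Qed.

Lemma matches_blk_word n (Phi : seq {set 'I_n}) : matches Phi (blk_word Phi).
Proof.
rewrite /matches size_blk_word eqxx; apply/forallP => j; apply/forallP => l.
by rewrite !nth_blk_word; apply/andP; split; apply/implyP.
Qed.

Lemma weakly_matches_blk_word n (Phi : seq {set 'I_n}) : weakly_matches Phi (blk_word Phi).
Proof.
apply/weakly_matchesP; split => [|j l]; first exact: size_blk_word.
by rewrite !nth_blk_word; split => // ->.
Qed.

Section Matches.

Variables (m : nat) (Psi : seq {set 'I_m}).

Lemma matches_size u : matches Psi u -> size u = m.
Proof. by case/andP => /eqP. Qed.

Lemma matches_ltn u : matches Psi u ->
  forall j l : 'I_m, (nth 0 u j < nth 0 u l) = (blk Psi j < blk Psi l).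
Proof.
case/andP => _ /forallP match_u j l.
have /andP [/implyP eq_jl /implyP lt_jl] := forallP (match_u j) l.
have /andP [_ /implyP lt_lj] := forallP (match_u l) j.
case: (ltngtP (blk Psi j) (blk Psi l)) => [/lt_jl // | /lt_lj /ltnW | /eqP/eq_jl /eqP ->].
  by rewrite leqNgt => /negbTE.
exact: ltnn.
Qed.

Lemma matches_ltn_nth u v : matches Psi u -> matches Psi v ->
  forall i k, i < m -> k < m -> (nth 0 u i < nth 0 u k) = (nth 0 v i < nth 0 v k).
Proof.
move=> match_u match_v i k lt_i lt_k.
by rewrite -[i]/(val (Ordinal lt_i)) -[k]/(val (Ordinal lt_k)) !matches_ltn.
Qed.

End Matches.

Lemma eq_weakly_matches m (Psi : seq {set 'I_m}) n (Phi : seq {set 'I_n}) u v :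
  matches Psi u -> matches Psi v -> weakly_matches Phi u = weakly_matches Phi v.
Proof.
move=> match_u match_v; rewrite /weakly_matches (matches_size match_u) (matches_size match_v).
have [eq_mn | //] := eqVneq m n; apply: eq_forallb => j; apply: eq_forallb => l.
by rewrite !(leqNgt (nth 0 _ _)) !(matches_ltn_nth match_u match_v) ?eq_mn.
Qed.

Lemma setcomp_matches_uniq n (Psi Phi : seq {set 'I_n}) u :
  is_setcomp Psi -> is_setcomp Phi -> matches Psi u -> matches Phi u -> Psi = Phi.
Proof.
move=> Psi_sc Phi_sc match_Psi match_Phi.
have eq_lt j l : (blk Psi j < blk Psi l) = (blk Phi j < blk Phi l).
  by rewrite -(matches_ltn match_Psi) (matches_ltn match_Phi).
apply: setcomp_eq => // j; apply/eqP; rewrite eqn_leq.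
by rewrite !(@blk_le n) // => a b; rewrite eq_lt.
Qed.

Definition std_setcomp n (w : word) : seq {set 'I_n} :=
  [seq [set j : 'I_n | nth 0 w j == x] | x <- sort leq (undup w)].

Lemma blk_std_setcomp n w (j : 'I_n) :
  blk (std_setcomp n w) j = index (nth 0 w j) (sort leq (undup w)).
Proof. by rewrite /blk find_map; apply: eq_find => x; rewrite /= inE eq_sym. Qed.

Section Standardization.

Variables (n : nat) (w : word).
Hypothesis size_w : size w = n.

Let levels := sort leq (undup w).

Lemma mem_levels (j : 'I_n) : nth 0 w j \in levels.
Proof. by rewrite mem_sort mem_undup mem_nth // size_w. Qed.

Lemma std_setcompP : is_setcomp (std_setcomp n w).
Proof.
apply/and3P; split.
- apply/allP => B /mapP [x]; rewrite mem_sort mem_undup => xw ->; apply/set0Pn.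
  have lt_idx : index x w < n by rewrite -size_w index_mem.
  by exists (Ordinal lt_idx); rewrite inE nth_index.
- rewrite pairwise_map.
  apply: sub_pairwise (_ : pairwise [rel x y | x != y] levels) => [x y /= neq_xy|].
    by apply/pred0P => j /=; rewrite !inE; apply: contraNF neq_xy => /andP [/eqP <- /eqP <-].
  by rewrite -uniq_pairwise sort_uniq undup_uniq.
- apply/forallP => j; apply/hasP; exists [set l : 'I_n | nth 0 w l == nth 0 w j].
    exact: map_f (mem_levels j).
  by rewrite inE.
Qed.

Lemma matches_std_setcomp : matches (std_setcomp n w) w.
Proof.
have levels_sorted : sorted leq levels by apply/sort_sorted/leq_total.
rewrite /matches size_w eqxx; apply/forallP => j; apply/forallP => l.
rewrite !blk_std_setcomp; apply/andP; split; apply/implyP.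
  move=> /eqP eq_idx.
  by rewrite -(nth_index 0 (mem_levels j)) eq_idx nth_index ?mem_levels.
move=> lt_idx; rewrite ltn_neqAle (sorted_ltn_index leq_trans levels_sorted) ?mem_levels // andbT.
by apply: contraTneq lt_idx => ->; rewrite ltnn.
Qed.

End Standardization.

(* Reading Phi as a word with bars, [pos Phi j] is the position of [j] and [bar Phi k] the
   position of its [k]-th bar. *)
Definition pos n (Phi : seq {set 'I_n}) (j : 'I_n) : nat := index (val j) (cword Phi).

Definition bar n (Phi : seq {set 'I_n}) k : nat :=
  sumn (take k [seq size (block_word B) | B <- Phi]).

Definition lex_lt n (Phi : seq {set 'I_n}) (j l : 'I_n) : bool :=
  (blk Phi j < blk Phi l) || (blk Phi j == blk Phi l) && (j < l).

Lemma barsP n (Phi : seq {set 'I_n}) b :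
  reflect (exists2 k, k <= size Phi & b = bar Phi k) (b \in bars Phi).
Proof.
apply: (iffP mapP) => [[k] | [k le_k ->]]; last by exists k; rewrite // mem_iota.
by rewrite mem_iota => /andP [_ lt_k] ->; exists k.
Qed.

Section Positions.

Variables (n : nat) (Phi : seq {set 'I_n}).
Hypothesis Phi_sc : is_setcomp Phi.

Lemma bar_size : bar Phi (size Phi) = n.
Proof.
rewrite /bar take_oversize ?size_map // -[RHS](size_cword Phi_sc).
by rewrite size_flatten /shape -map_comp.
Qed.

Lemma bar_le k : bar Phi k <= n.
Proof.
apply: (@leq_trans (bar Phi (size Phi))); last by rewrite bar_size.
rewrite /bar [X in _ <= sumn X]take_oversize ?size_map //.
by rewrite -[X in _ <= sumn X](cat_take_drop k) sumn_cat leq_addr.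
Qed.

Lemma setcomp_size : size Phi <= n.
Proof.
rewrite -[leqRHS]bar_size /bar take_oversize ?size_map // sumnE big_map -sum1_size.
case/setcompP: Phi_sc => nonempty _ _.
rewrite big_seq [leqRHS]big_seq; apply: leq_sum => B /nonempty; exact: size_block_word_gt0.
Qed.

Lemma pos_lt_bar j k : (pos Phi j < bar Phi k) = (blk Phi j < k).
Proof.
have -> : bar Phi k = sumn (take k (shape [seq block_word B | B <- Phi])).
  by rewrite /shape -map_comp.
rewrite index_flatten_ltn ?find_map ?find_block_word //.
exact: ord_in_cword.
Qed.

Lemma pos_lt_same_blk j l : blk Phi j = blk Phi l -> j < l -> pos Phi j < pos Phi l.
Proof.
move=> eq_blk lt_jl; apply: index_flatten_sorted => //.
- by apply/allP => _ /mapP [B _ ->]; apply: sorted_block_word.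
- exact: ord_in_cword.
- exact: ord_in_cword.
- by rewrite !find_map !find_block_word.
Qed.

Lemma pos_lt_lex j l : lex_lt Phi j l -> pos Phi j < pos Phi l.
Proof.
case/orP => [lt_blk | /andP [/eqP eq_blk lt_jl]]; last exact: pos_lt_same_blk.
have := pos_lt_bar j (blk Phi l); have := pos_lt_bar l (blk Phi l).
by rewrite lt_blk ltnn; lia.
Qed.

Lemma pos_ltE j l : j != l -> (pos Phi j < pos Phi l) = lex_lt Phi j l.
Proof.
move=> neq_jl; apply/idP/idP => [lt_pos | ]; last exact: pos_lt_lex.
rewrite /lex_lt; case: (ltngtP (blk Phi j) (blk Phi l)) => //= [gt_blk | eq_blk].
  by have := pos_lt_lex (l := j) (j := l); rewrite /lex_lt gt_blk => /(_ isT); lia.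
have [// | le_lj] := ltnP j l.
have lt_lj : l < j by rewrite ltn_neqAle le_lj andbT eq_sym.
by have := pos_lt_same_blk (esym eq_blk) lt_lj; lia.
Qed.

Lemma pos_surj i : i < n -> exists j, pos Phi j = i.
Proof.
move=> lt_i; have lt_x : nth 0 (cword Phi) i < n.
  by rewrite -(mem_cword_setcomp Phi_sc) mem_nth ?size_cword.
exists (Ordinal lt_x); rewrite /pos index_uniq ?size_cword //.
by apply: uniq_cword; case/setcompP: Phi_sc.
Qed.

Lemma pos_succ_bar j l : blk Phi j < blk Phi l -> (pos Phi j).+1 = pos Phi l ->
  pos Phi l = bar Phi (blk Phi l).
Proof.
have := pos_lt_bar j (blk Phi l); have := pos_lt_bar l (blk Phi l).
by rewrite ltnn => + + lt_blk; rewrite lt_blk; lia.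
Qed.

End Positions.

Lemma cword_eq_lex n (Psi Phi : seq {set 'I_n}) : is_setcomp Psi -> is_setcomp Phi ->
  (forall j l, lex_lt Phi j l -> lex_lt Psi j l) -> cword Psi = cword Phi.
Proof.
move=> Psi_sc Phi_sc lex_sub.
have uniq_Psi : uniq (cword Psi) by apply: uniq_cword; case/setcompP: Psi_sc.
pose before x y := index x (cword Psi) < index y (cword Psi).
apply: (@irr_sorted_eq _ before); first by move=> y x z; apply: ltn_trans.
- by move=> x; apply: ltnn.
- by apply/(sortedP 0) => i lt_i; rewrite /before !index_uniq // ltnW.
- apply/(sortedP 0) => i; rewrite (size_cword Phi_sc) => lt_i.
  have [j pos_j] := pos_surj Phi_sc (ltnW lt_i); have [l pos_l] := pos_surj Phi_sc lt_i.
  have neq_jl : j != l by apply/eqP => eq_jl; rewrite eq_jl in pos_j; lia.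
  rewrite -pos_l -pos_j (nth_index 0 (ord_in_cword Phi_sc j)).
  rewrite (nth_index 0 (ord_in_cword Phi_sc l)).
  rewrite /before; have := pos_ltE Psi_sc neq_jl; rewrite /pos => ->; apply: lex_sub.
  by rewrite -(pos_ltE Phi_sc neq_jl) pos_j pos_l.
- by move=> x; rewrite !mem_cword_setcomp.
Qed.

Lemma reforms_weakly_matches n (Psi Phi : seq {set 'I_n}) : is_setcomp Psi -> is_setcomp Phi ->
  reforms Psi Phi -> weakly_matches Phi (blk_word Psi).
Proof.
move=> Psi_sc Phi_sc /andP [/eqP eq_cword /allP sub_bars].
have eq_pos j : pos Psi j = pos Phi j by rewrite /pos eq_cword.
apply/weakly_matchesP; split => [|j l]; first exact: size_blk_word.
rewrite !nth_blk_word; split => [eq_blk le_jl | lt_blk].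
  have [-> // | neq_jl] := eqVneq j l.
  have lt_jl : j < l by rewrite ltn_neqAle le_jl andbT.
  have := pos_lt_same_blk Phi_sc eq_blk lt_jl.
  rewrite -!eq_pos (pos_ltE Psi_sc neq_jl) /lex_lt.
  by case/orP => [/ltnW // | /andP [/eqP -> _]].
have /barsP [k _ eq_bar] : bar Phi (blk Phi l) \in bars Psi.
  by apply: sub_bars; apply/barsP; exists (blk Phi l) => //; apply/ltnW/blk_lt_size.
have lt_j : pos Phi j < bar Phi (blk Phi l) by rewrite (pos_lt_bar Phi_sc) lt_blk.
have ge_l : ~~ (pos Phi l < bar Phi (blk Phi l)) by rewrite (pos_lt_bar Phi_sc) ltnn.
rewrite eq_bar -!eq_pos !(pos_lt_bar Psi_sc) in lt_j ge_l; lia.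
Qed.

Lemma weakly_matches_reforms n (Psi Phi : seq {set 'I_n}) : is_setcomp Psi -> is_setcomp Phi ->
  weakly_matches Phi (blk_word Psi) -> reforms Psi Phi.
Proof.
move=> Psi_sc Phi_sc /weakly_matchesP [_ mono].
have lt_blk j l : blk Phi j < blk Phi l -> blk Psi j < blk Psi l.
  by move=> /(mono j l).2; rewrite !nth_blk_word.
have lex_sub j l : lex_lt Phi j l -> lex_lt Psi j l.
  case/orP => [/lt_blk lt_jl | /andP [/eqP eq_blk lt_jl]]; first by rewrite /lex_lt lt_jl.
  have := (mono j l).1 eq_blk (ltnW lt_jl); rewrite !nth_blk_word leq_eqVlt /lex_lt.
  by case/orP => ->; rewrite ?lt_jl ?orbT.
have eq_cword := cword_eq_lex Psi_sc Phi_sc lex_sub.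
have eq_pos j : pos Psi j = pos Phi j by rewrite /pos eq_cword.
rewrite /reforms eq_cword eqxx; apply/allP => _ /barsP [k _ ->].
have [bar0 | bar_gt0] := posnP (bar Phi k).
  by rewrite bar0; apply/barsP; exists 0; rewrite // /bar take0.
have [bar_lt | bar_ge] := ltnP (bar Phi k) n; last first.
  have barn : bar Phi k = n by apply/eqP; rewrite eqn_leq bar_ge bar_le.
  by rewrite barn; apply/barsP; exists (size Psi); rewrite ?bar_size.
(* An inner bar of Phi separates two consecutive letters lying in different blocks of Phi,
   hence of Psi. *)
have [j pos_j] : exists j, pos Phi j = (bar Phi k).-1 by apply: pos_surj; lia.
have [l pos_l] := pos_surj Phi_sc bar_lt.
have lt_jl : blk Phi j < blk Phi l.
  have := pos_lt_bar Phi_sc j k; have := pos_lt_bar Phi_sc l k.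
  rewrite pos_j pos_l ltnn ltn_predL bar_gt0; lia.
apply/barsP; exists (blk Psi l); first exact/ltnW/blk_lt_size.
rewrite -pos_l -eq_pos (pos_succ_bar Psi_sc (lt_blk _ _ lt_jl)) // !eq_pos pos_j pos_l.
by rewrite prednK.
Qed.

Lemma reformsE n (Psi Phi : seq {set 'I_n}) : is_setcomp Psi -> is_setcomp Phi ->
  reforms Psi Phi = weakly_matches Phi (blk_word Psi).
Proof.
move=> Psi_sc Phi_sc.
by apply/idP/idP; [apply: reforms_weakly_matches | apply: weakly_matches_reforms].
Qed.

Definition blk_sum n (Phi : seq {set 'I_n}) : nat := \sum_(j : 'I_n) blk Phi j.

Lemma blk_sum_lt n (Psi Phi : seq {set 'I_n}) : is_setcomp Psi -> is_setcomp Phi ->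
  Psi != Phi -> weakly_matches Psi (blk_word Phi) -> blk_sum Psi < blk_sum Phi.
Proof.
move=> Psi_sc Phi_sc neq /weakly_matchesP [_ mono].
have le_blk : forall j, blk Psi j <= blk Phi j.
  by apply: blk_le => // j l /(mono j l).2; rewrite !nth_blk_word.
have [j neq_j] : exists j, blk Psi j != blk Phi j.
  apply/existsP; apply: contraR neq; rewrite negb_exists => /forallP eq_blk.
  by apply/eqP/setcomp_eq => // j; apply/eqP; rewrite -[_ == _]negbK eq_blk.
rewrite /blk_sum (bigD1 j) // [X in _ < X](bigD1 j) //= -addSn.
by apply: leq_add; [rewrite ltn_neqAle neq_j le_blk | apply: leq_sum].
Qed.

Local Open Scope ring_scope.

Lemma sum_setcompE (R : nzRingType) n (P : seq {set 'I_n} -> bool)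
    (G : seq {set 'I_n} -> R) :
  sum_setcomp P G = \sum_(Psi : n.-bseq {set 'I_n} | is_setcomp Psi && P Psi) G Psi.
Proof.
by rewrite /sum_setcomp sig_big_dep (reindex bseq_tagged_tuple) //=; apply: onW_bij.
Qed.

Lemma sum_setcomp_Mser (R : nzRingType) n (P : seq {set 'I_n} -> bool) (w : word) :
  sum_setcomp P (fun Psi => Mser R Psi w) = ((size w == n) && P (std_setcomp n w))%:R.
Proof.
rewrite sum_setcompE; have [size_w | nsize_w] := eqVneq (size w) n; last first.
  by rewrite big1 // => Psi _; rewrite /Mser /matches (negbTE nsize_w).
have std_sc := std_setcompP size_w.
pose std : n.-bseq {set 'I_n} := Bseq (setcomp_size std_sc).
have matchesE (Psi : n.-bseq {set 'I_n}) : is_setcomp Psi -> matches Psi w = (Psi == std).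
  move=> Psi_sc; apply/idP/eqP => [match_Psi | ->]; last exact: matches_std_setcomp.
  exact/val_inj/(setcomp_matches_uniq Psi_sc std_sc match_Psi (matches_std_setcomp size_w)).
rewrite (eq_bigr (fun Psi => (Psi == std)%:R)) => [|Psi /andP [Psi_sc _]]; last first.
  by rewrite /Mser matchesE.
case: (boolP (P std)) => [P_std | nP_std].
  by rewrite (bigD1 std) ?std_sc ?P_std //= eqxx big1 ?addr0 // => Psi /andP [_ /negbTE ->].
by rewrite big1 // => Psi /andP [_ P_Psi]; case: eqP => // eq_Psi; rewrite -eq_Psi P_Psi in nP_std.
Qed.

Lemma Fser_sum_Mser (R : nzRingType) n (Phi : seq {set 'I_n}) w : is_setcomp Phi ->
  Fser R Phi w = sum_setcomp (fun Psi => reforms Psi Phi) (fun Psi => Mser R Psi w).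
Proof.
move=> Phi_sc; rewrite FserE // sum_setcomp_Mser.
have [size_w | nsize_w] := eqVneq (size w) n; last by rewrite /weakly_matches (negbTE nsize_w).
rewrite reformsE ?std_setcompP //.
by rewrite -(eq_weakly_matches Phi (matches_std_setcomp size_w) (matches_blk_word _)).
Qed.

Lemma Fser_NCQSym (R : nzRingType) n (Phi : seq {set 'I_n}) : is_setcomp Phi ->
  in_NCQSym (Fser R Phi).
Proof.
move=> Phi_sc; split; first by exists n => w lt_w; rewrite FserE // /weakly_matches gtn_eqF.
move=> m Psi _ u v match_u match_v.
by rewrite !FserE // (eq_weakly_matches Phi match_u match_v).
Qed.

Lemma big_Fser (R : nzRingType) d (c : forall n, seq {set 'I_n} -> R) (w : word) :
  \sum_(n < d) sum_setcomp (fun _ => true) (fun Psi => c n Psi * Fser R Psi w) =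
  if (size w < d)%N then
    \sum_(Psi : (size w).-bseq {set 'I_(size w)} | is_setcomp Psi) c _ Psi * Fser R Psi w
  else 0.
Proof.
have Fser0 n (Psi : seq {set 'I_n}) : is_setcomp Psi -> n != size w -> Fser R Psi w = 0.
  by move=> Psi_sc neq; rewrite FserE // /weakly_matches eq_sym (negbTE neq).
have sum0 (n : 'I_d) : n != size w :> nat ->
    sum_setcomp (fun _ => true) (fun Psi => c n Psi * Fser R Psi w) = 0.
  move=> neq; rewrite sum_setcompE big1 // => Psi /andP [Psi_sc _].
  by rewrite Fser0 ?mulr0.
case: ltnP => [lt_w | ge_w]; last first.
  by rewrite big1 // => n _; rewrite sum0 // neq_ltn (leq_trans (ltn_ord n) ge_w).
rewrite (bigD1 (Ordinal lt_w)) //= big1 ?addr0 => [|n neq_n]; last exact: sum0.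
by rewrite sum_setcompE; apply: eq_bigl => Psi; rewrite andbT.
Qed.

Section FBasis.

Variable R : nzRingType.

Let Fmx n (Psi Phi : n.-bseq {set 'I_n}) : R := Fser R Psi (blk_word Phi).

Let Fmx_diag n (Phi : n.-bseq {set 'I_n}) : is_setcomp Phi -> Fmx Phi Phi = 1.
Proof. by move=> Phi_sc; rewrite /Fmx FserE // weakly_matches_blk_word. Qed.

Let Fmx_triangular n (Psi Phi : n.-bseq {set 'I_n}) : is_setcomp Psi -> is_setcomp Phi ->
  Psi != Phi -> Fmx Psi Phi != 0 -> (blk_sum Psi < blk_sum Phi)%N.
Proof.
move=> Psi_sc Phi_sc neq; rewrite /Fmx FserE //.
by case: (boolP (weakly_matches _ _)) => [/(blk_sum_lt Psi_sc Phi_sc neq) | _]; rewrite ?eqxx.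
Qed.

Lemma Fser_independent d (c : forall n, seq {set 'I_n} -> R) :
  (forall w : word,
     \sum_(n < d) sum_setcomp (fun _ => true) (fun Psi => c n Psi * Fser R Psi w) = 0) ->
  forall n (Phi : seq {set 'I_n}), (n < d)%N -> is_setcomp Phi -> c n Phi = 0.
Proof.
move=> sum0 n Phi lt_n Phi_sc.
apply: (unitriangular_independent (@Fmx_diag n) (@Fmx_triangular n)
          (c := fun Psi => c n Psi) _ (y := Bseq (setcomp_size Phi_sc))) => // Psi _.
by have := sum0 (blk_word Psi); rewrite big_Fser size_blk_word lt_n.
Qed.

Lemma Fser_spanning (f : series R) : in_NCQSym f ->
  exists (d : nat) (c : forall n, seq {set 'I_n} -> R), forall w : word,
    f w = \sum_(n < d) sum_setcomp (fun _ => true) (fun Psi => c n Psi * Fser R Psi w).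
Proof.
move=> [[D f_bounded] f_inv].
pose c n (Phi : seq {set 'I_n}) :=
  unitriangular_solve (fun Psi : n.-bseq _ => is_setcomp Psi) (fun Psi => blk_sum Psi)
    (@Fmx n) (fun Psi => f (blk_word Psi)) (insub_bseq n Phi).
exists D.+1, c => w; rewrite big_Fser; case: ltnP => [lt_w | ge_w]; last exact: f_bounded.
have std_sc := std_setcompP (erefl (size w)).
have match_std := matches_std_setcomp (erefl (size w)).
rewrite (f_inv _ _ std_sc _ _ match_std (matches_blk_word _)).
rewrite -(unitriangular_solveP (@Fmx_diag _) (@Fmx_triangular _) (fun Psi => f (blk_word Psi))
            (y := Bseq (setcomp_size std_sc))) //.
apply: eq_bigr => Psi Psi_sc; rewrite /c /insub_bseq valKd /Fmx !FserE //.
by rewrite (eq_weakly_matches Psi match_std (matches_blk_word _)).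
Qed.

End FBasis.

Theorem mainTheorem11 (R : fieldType) :
  (* F_Phi = sum of M_Psi over Psi reforming Phi *)
  (forall n (Phi : seq {set 'I_n}), is_setcomp Phi ->
     forall w : word,
       Fser R Phi w = sum_setcomp (fun Psi => reforms Psi Phi) (fun Psi => Mser R Psi w))
  /\
  (* {F_Phi} is a basis of NCQSym: (i) each F_Phi lies in NCQSym *)
  (forall n (Phi : seq {set 'I_n}), is_setcomp Phi -> in_NCQSym (Fser R Phi))
  /\
  (* (ii) linear independence *)
  (forall (d : nat) (c : forall n, seq {set 'I_n} -> R),
     (forall w : word,
        \sum_(n < d) sum_setcomp (fun _ => true) (fun Psi => c n Psi * Fser R Psi w) = 0) ->
     forall n (Phi : seq {set 'I_n}), (n < d)%N -> is_setcomp Phi -> c n Phi = 0)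
  /\
  (* (iii) spanning *)
  (forall f : series R, in_NCQSym f ->
     exists (d : nat) (c : forall n, seq {set 'I_n} -> R),
       forall w : word,
         f w = \sum_(n < d) sum_setcomp (fun _ => true) (fun Psi => c n Psi * Fser R Psi w)).
Proof.
split; first by move=> n Phi Phi_sc w; apply: Fser_sum_Mser.
split; first exact: Fser_NCQSym.
split; first exact: Fser_independent.
exact: Fser_spanning.
Qed.
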